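(* Let $\mathfrak{v}=(V_i,v_i,v^i)_{i\in\mathbb Z}$ be a special chain over $\mathcal Z$ and let $i,j\in\mathbb Z$ with $i<j$. If $\mathfrak{v}$ is a linked chain, then $\ker(v^i_j)=\ker(v^i)$ and $\ker(v^j_i)=\ker(v_j)$. If $\mathfrak{v}$ is a colinked chain, then $\mathrm{Im}(v^i_j)=\mathrm{Im}(v^{j-1})$ and $\mathrm{Im}(v^j_i)=\mathrm{Im}(v_i)$.
   Context: Let $k$ be a field. $\mathcal Z$ is the quiver with vertex set $\mathbb Z$ and, for each $i\in\mathbb Z$, an arrow $\alpha^i\colon i\to i+1$ and an arrow $\alpha_i\colon i+1\to i$. A representation $\mathfrak{v}=(V_i,v_i,v^i)_{i\in\mathbb Z}$ of $\mathcal Z$ consists of finite-dimensional $k$-vector spaces $V_i$ and linear maps $v^i\colon V_i\to V_{i+1}$, $v_i\colon V_{i+1}\to V_i$. For $i,j\in\mathbb Z$ set $v^i_i=\mathrm{Id}_{V_i}$, $v^i_j=v^{j-1}\circ\cdots\circ v^i\colon V_i\to V_j$ if $j>i$, and $v^i_j=v_j\circ v_{j+1}\circ\cdots\circ v_{i-1}\colon V_i\to V_j$ if $j<i$. A special chain is a representation with $v_i\circ v^i=0$ and $v^i\circ v_i=0$ for all $i$. A linked chain is a special chain with $\ker(v_{i-1})\cap\ker(v^i)=0$ for all $i$. A colinked chain is a special chain with $\mathrm{Im}(v_i)+\mathrm{Im}(v^{i-1})=V_i$ for all $i$. *)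

From HB Require Import structures.
From mathcomp Require Import all_boot all_order all_algebra.
Set Implicit Arguments. Unset Strict Implicit. Unset Printing Implicit Defensive.
Import GRing.Theory.
Local Open Scope ring_scope.

(* A representation of the quiver Z over a field K:
   V i finite-dimensional (vectType), vup i = v^i : V_i -> V_{i+1},
   vdn i = v_i : V_{i+1} -> V_i. *)
Section ZRep.
Variables (K : fieldType) (V : int -> vectType K).
Variables (vup : forall i : int, 'Hom(V i, V (i + 1)))
          (vdn : forall i : int, 'Hom(V (i + 1), V i)).

(* identity transport V i -> V j along i = j (zero if i <> j; only used
   with i = j) *)
Definition castV (i j : int) : 'Hom(V i, V j) :=
  match i =P j with
  | ReflectT e => eq_rect i (fun k => 'Hom(V i, V k)) \1%VF j e
  | ReflectF _ => 0
  end.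

(* upn n i j = v^{j-1} o ... o v^i (n factors, meaningful when j = i + n) *)
Fixpoint upn (n : nat) (i j : int) : 'Hom(V i, V j) :=
  match n with
  | 0%N => castV i j
  | m.+1 => (upn m (i + 1) j \o vup i)%VF
  end.

(* dnn n i j = v_j o v_{j+1} o ... o v_{i-1} (n factors, when i = j + n) *)
Fixpoint dnn (n : nat) (i j : int) : 'Hom(V i, V j) :=
  match n with
  | 0%N => castV i j
  | m.+1 => (vdn j \o dnn m i (j + 1))%VF
  end.

Definition vcomp (i j : int) : 'Hom(V i, V j) :=
  if i <= j then upn `|j - i|%N i j else dnn `|i - j|%N i j.

Definition special_chain : Prop :=
  (forall i, (vdn i \o vup i)%VF = 0) /\ (forall i, (vup i \o vdn i)%VF = 0).

(* ker(v_{i-1}) /\ ker(v^i) = 0 for all i, reindexed i := i+1 *)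
Definition linked_chain : Prop :=
  special_chain /\ forall i, (lker (vdn i) :&: lker (vup (i + 1)))%VS = 0%VS.

(* Im(v_i) + Im(v^{i-1}) = V_i for all i, reindexed i := i+1 *)
Definition colinked_chain : Prop :=
  special_chain /\ forall i, (limg (vdn (i + 1)) + limg (vup i))%VS = fullv.

End ZRep.

(* In a special chain v_i v^i = 0, so v^i maps V_i into ker(v_i), and if the
   chain is linked, v^{i+1} is injective on ker(v_i); hence
   ker(v^{i+1} v^i) = ker(v^i), and dually ker(v_i v_{i+1}) = ker(v_{i+1}).
   If the chain is colinked, V_{i+1} = Im(v_{i+1}) + Im(v^i) and v^{i+1} kills
   Im(v_{i+1}), hence Im(v^{i+1} v^i) = Im(v^{i+1}), and dually
   Im(v_i v_{i+1}) = Im(v_i). *)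
From HB Require Import structures.
From mathcomp Require Import all_boot all_order all_algebra.
From mathcomp Require Import zify.
Set Implicit Arguments. Unset Strict Implicit. Unset Printing Implicit Defensive.
Import Order.TTheory GRing.Theory Num.Theory.
Local Open Scope ring_scope.

Lemma lt_int_addS (i j : int) :
  i < j -> exists2 n : nat, `|j - i|%N = n.+1 & i + n.+1%:Z = j.
Proof. by move=> ltij; exists `|j - i|.-1%N; lia. Qed.

Section LinearMaps.
Variables (K : fieldType) (aT bT cT dT : vectType K).

Lemma lker_comp_eq (f1 : 'Hom(bT, cT)) (f2 : 'Hom(bT, dT)) (g : 'Hom(aT, bT)) :
  lker f1 = lker f2 -> lker (f1 \o g)%VF = lker (f2 \o g)%VF.
Proof.
move=> eq_ker; apply/vspaceP => x.
by rewrite !memv_ker !comp_lfunE -!memv_ker eq_ker.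
Qed.

Lemma limg_comp_eq (f : 'Hom(bT, cT)) (g1 : 'Hom(aT, bT)) (g2 : 'Hom(dT, bT)) :
  limg g1 = limg g2 -> limg (f \o g1)%VF = limg (f \o g2)%VF.
Proof. by move=> eq_img; rewrite !limg_comp eq_img. Qed.

End LinearMaps.

Section Chain.
Variables (K : fieldType) (V : int -> vectType K).
Variables (vup : forall i : int, 'Hom(V i, V (i + 1)))
          (vdn : forall i : int, 'Hom(V (i + 1), V i)).

Lemma castV_id i : castV V i i = \1%VF.
Proof.
by rewrite /castV; case: (i =P i) => // e; rewrite (eq_irrelevance e (erefl i)).
Qed.

Lemma upnS n i j : upn vup n.+1 i j = (upn vup n (i + 1) j \o vup i)%VF.
Proof. by []. Qed.

Lemma dnnS n i j : dnn vdn n.+1 j i = (vdn i \o dnn vdn n j (i + 1))%VF.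
Proof. by []. Qed.

Lemma vcomp_up i j : i < j -> vcomp vup vdn i j = upn vup `|j - i| i j.
Proof. by move=> ltij; rewrite /vcomp ltW. Qed.

Lemma vcomp_dn i j : i < j -> vcomp vup vdn j i = dnn vdn `|j - i| j i.
Proof. by move=> ltij; rewrite /vcomp leNgt ltij. Qed.

Lemma vcomp_pred_up j : vcomp vup vdn (j - 1) j = upn vup 1 (j - 1) j.
Proof. by rewrite vcomp_up ?gtrBl // opprB addrC subrK. Qed.

Lemma vcomp_pred_dn j : vcomp vup vdn j (j - 1) = dnn vdn 1 j (j - 1).
Proof. by rewrite vcomp_dn ?gtrBl // opprB addrC subrK. Qed.

Section Linked.
Hypothesis linked : linked_chain vup vdn.

Lemma lker_up_up i : lker (vup (i + 1) \o vup i)%VF = lker (vup i).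
Proof.
have [[dn_up _] ker_cap] := linked.
apply/vspaceP => x; rewrite !memv_ker comp_lfunE.
apply/eqP/eqP => [upx0|->]; last exact: linear0.
apply/eqP; rewrite -memv0 -(ker_cap i) memv_cap !memv_ker upx0 eqxx andbT.
by rewrite -comp_lfunE dn_up lfunE.
Qed.

Lemma lker_dn_dn i : lker (vdn i \o vdn (i + 1))%VF = lker (vdn (i + 1)).
Proof.
have [[_ up_dn] ker_cap] := linked.
apply/vspaceP => x; rewrite !memv_ker comp_lfunE.
apply/eqP/eqP => [dnx0|->]; last exact: linear0.
apply/eqP; rewrite -memv0 -(ker_cap i) memv_cap !memv_ker dnx0 eqxx /=.
by rewrite -comp_lfunE up_dn lfunE.
Qed.

Lemma lker_upnS n i j : i + n.+1%:Z = j -> lker (upn vup n.+1 i j) = lker (vup i).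
Proof.
elim: n i => [|n IHn] i eij.
  have {}eij : i + 1 = j by rewrite -eij.
  by subst j; rewrite /= castV_id comp_lfun1l.
rewrite upnS -(lker_up_up i).
by apply: lker_comp_eq; apply: IHn; rewrite -eij; lia.
Qed.

Lemma lker_dnnS n i j :
  i + n.+1%:Z = j -> lker (dnn vdn n.+1 j i) = lker (dnn vdn 1 j (j - 1)).
Proof.
elim: n i => [|n IHn] i eij.
  have {}eij : i = j - 1 by rewrite -eij; lia.
  by subst i.
rewrite -(IHn (i + 1)); last by rewrite -eij; lia.
rewrite !dnnS comp_lfunA.
by apply: lker_comp_eq; apply: lker_dn_dn.
Qed.

End Linked.

Section Colinked.
Hypothesis colinked : colinked_chain vup vdn.

Lemma limg_up_up i : limg (vup (i + 1) \o vup i)%VF = limg (vup (i + 1)).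
Proof.
have [[_ up_dn] img_sum] := colinked.
rewrite -(img_sum i) limgD -!limg_comp up_dn.
by rewrite lim0g add0v.
Qed.

Lemma limg_dn_dn i : limg (vdn i \o vdn (i + 1))%VF = limg (vdn i).
Proof.
have [[dn_up _] img_sum] := colinked.
rewrite -(img_sum i) limgD -!limg_comp dn_up.
by rewrite lim0g addv0.
Qed.

Lemma limg_upnS n i j :
  i + n.+1%:Z = j -> limg (upn vup n.+1 i j) = limg (upn vup 1 (j - 1) j).
Proof.
elim: n i => [|n IHn] i eij.
  have {}eij : i = j - 1 by rewrite -eij; lia.
  by subst i.
rewrite -(IHn (i + 1)); last by rewrite -eij; lia.
rewrite !upnS -comp_lfunA.
by apply: limg_comp_eq; apply: limg_up_up.
Qed.

Lemma limg_dnnS n i j : i + n.+1%:Z = j -> limg (dnn vdn n.+1 j i) = limg (vdn i).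
Proof.
elim: n i => [|n IHn] i eij.
  have {}eij : j = i + 1 by rewrite -eij.
  by subst j; rewrite /= castV_id comp_lfun1r.
rewrite dnnS -(limg_dn_dn i).
by apply: limg_comp_eq; apply: IHn; rewrite -eij; lia.
Qed.

End Colinked.
End Chain.

Theorem proposition2p4 (K : fieldType) (V : int -> vectType K)
  (vup : forall i : int, 'Hom(V i, V (i + 1)))
  (vdn : forall i : int, 'Hom(V (i + 1), V i))
  (Hspecial : special_chain vup vdn) (i j : int) (hij : i < j) :
  (linked_chain vup vdn ->
     lker (vcomp vup vdn i j) = lker (vup i) /\
     lker (vcomp vup vdn j i) = lker (vcomp vup vdn j (j - 1))) /\
  (colinked_chain vup vdn ->
     limg (vcomp vup vdn i j) = limg (vcomp vup vdn (j - 1) j) /\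
     limg (vcomp vup vdn j i) = limg (vdn i)).
Proof.
(* Hspecial is unused: it is part of linked_chain and of colinked_chain. *)
have [n dist_ij eij] := lt_int_addS hij.
rewrite vcomp_up // vcomp_dn // vcomp_pred_up vcomp_pred_dn dist_ij.
split=> [linked | colinked].
  by split; [exact: (lker_upnS linked eij) | exact: (lker_dnnS linked eij)].
by split; [exact: (limg_upnS colinked eij) | exact: (limg_dnnS colinked eij)].
Qed.
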